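(* Let $B$ be a ring and $S\subseteq S_0(B)$ a multiplicative subset of $B$ such that $S^{-1}B$ exists. If every left regular element of $S^{-1}B$ is regular, then every left regular element of $B$ is regular. The right-side version also holds: if $BS^{-1}$ exists and every right regular element of $BS^{-1}$ is regular, then every right regular element of $B$ is regular.
   Context: Rings are associative with identity. $S_0(B)$ is the set of regular elements (non-zero-divisors on both sides) of $B$. An element $x$ of a ring is left regular if $rx=0$ implies $r=0$, and right regular if $xr=0$ implies $r=0$. A multiplicative subset $S$ satisfies $1\in S$, $0\notin S$, and is closed under products. $S^{-1}B$ (respectively $BS^{-1}$) denotes the left (respectively right) ring of fractions of $B$ with respect to $S$. For $S$ consisting of regular elements, $S^{-1}B$ exists iff the left Ore condition holds: for all $a\in B$, $s\in S$ there are $s'\in S$, $a'\in B$ with $s'a=a's$. The right case is symmetric. *)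

From HB Require Import structures.
From mathcomp Require Import all_boot all_algebra.
Set Implicit Arguments. Unset Strict Implicit. Unset Printing Implicit Defensive.
Import GRing.Theory.
Local Open Scope ring_scope.

Definition left_regular (R : nzRingType) (x : R) : Prop :=
  forall r : R, r * x = 0 -> r = 0.
Definition right_regular (R : nzRingType) (x : R) : Prop :=
  forall r : R, x * r = 0 -> r = 0.
(* regular = non-zero-divisor on both sides, i.e. x \in S_0(R) *)
Definition regular (R : nzRingType) (x : R) : Prop :=
  left_regular x /\ right_regular x.

Definition multiplicative (R : nzRingType) (S : pred R) : Prop :=
  [/\ 1 \in S, 0 \notin S & forall a b, a \in S -> b \in S -> a * b \in S].

Definition is_inverse (R : nzRingType) (x u : R) : Prop :=
  u * x = 1 /\ x * u = 1.

Definition left_ring_of_fractions (B Q : nzRingType) (f : {rmorphism B -> Q})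
    (S : pred B) : Prop :=
  [/\ (forall s, s \in S -> exists u, is_inverse (f s) u),
      (forall q : Q, exists s b u, [/\ s \in S, is_inverse (f s) u & q = u * f b])
    & (forall b, f b = 0 <-> exists2 s, s \in S & s * b = 0)].

Definition right_ring_of_fractions (B Q : nzRingType) (f : {rmorphism B -> Q})
    (S : pred B) : Prop :=
  [/\ (forall s, s \in S -> exists u, is_inverse (f s) u),
      (forall q : Q, exists s b u, [/\ s \in S, is_inverse (f s) u & q = f b * u])
    & (forall b, f b = 0 <-> exists2 s, s \in S & b * s = 0)].

(** Let x be left regular in B. If q = (f s)^-1 f b kills f x, then f (b x) = 0,
    so t b x = 0 for some t in S; left regularity of x gives t b = 0, hence
    f b = 0 and q = 0. Thus f x is left regular, hence regular in S^-1 B. If now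
    x r = 0, then f x f r = 0 forces f r = 0, so t r = 0 for some regular t in S
    and r = 0. The right-hand statement is the left-hand one for the converse
    rings B^c and (BS^-1)^c = (B^c)S^-1. *)

From HB Require Import structures.
From Pilot Require Import Defs.
From mathcomp Require Import all_boot all_algebra.
Set Implicit Arguments. Unset Strict Implicit. Unset Printing Implicit Defensive.
Import GRing.Theory.
Local Open Scope ring_scope.

Lemma is_inverse_sym (R : nzRingType) (x u : R) :
  is_inverse x u -> is_inverse u x.
Proof. by case. Qed.

Lemma is_inverse_regular (R : nzRingType) (x u : R) :
  is_inverse x u -> regular x.
Proof.
move=> [ux1 xu1]; split=> r.
- by move=> rx0; rewrite -[r]mulr1 -xu1 mulrA rx0 mul0r.
- by move=> xr0; rewrite -[r]mul1r -ux1 -mulrA xr0 mulr0.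
Qed.

Lemma right_regular_of_rmorph (B Q : nzRingType) (f : {rmorphism B -> Q})
    (S : pred B) (x : B) :
  (forall s, s \in S -> right_regular s) ->
  (forall b, f b = 0 -> exists2 s, s \in S & s * b = 0) ->
  right_regular (f x) -> right_regular x.
Proof.
move=> Sreg kerf fxreg r xr0.
have /kerf[t tS tr0] : f r = 0 by apply: fxreg; rewrite -rmorphM xr0 rmorph0.
exact: Sreg tr0.
Qed.

Section LeftRingOfFractions.

Variables (B Q : nzRingType) (f : {rmorphism B -> Q}) (S : pred B).
Hypothesis fracS : left_ring_of_fractions f S.

Lemma rmorph_left_regular_fractions (x : B) :
  left_regular x -> left_regular (f x).
Proof.
case: fracS => invS repQ kerf xreg q.
have [s [b [u [sS invs ->]]]] := repQ q; rewrite -mulrA => ufbx0.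
have /kerf[t tS tbx0] : f (b * x) = 0.
  by rewrite rmorphM; apply: (is_inverse_regular (is_inverse_sym invs)).2.
have [v invt] := invS t tS.
have tb0 : t * b = 0 by apply: xreg; rewrite -mulrA.
have fb0 : f b = 0.
  by apply: (is_inverse_regular invt).2; rewrite -rmorphM tb0 rmorph0.
by rewrite fb0 mulr0.
Qed.

Lemma left_regular_regular_fractions :
  (forall s, s \in S -> regular s) ->
  (forall q : Q, left_regular q -> regular q) ->
  forall x : B, left_regular x -> regular x.
Proof.
case: fracS => _ _ kerf Sreg Qreg x xreg; split=> //.
apply: (right_regular_of_rmorph (f := f) (S := S)).
- by move=> s /Sreg[].
- by move=> b /kerf.
- by case: (Qreg _ (rmorph_left_regular_fractions xreg)).
Qed.

End LeftRingOfFractions.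

Lemma is_inverse_converse (R : nzRingType) (x u : R) :
  @is_inverse R^c x u <-> is_inverse x u.
Proof. by split=> -[]. Qed.

Lemma left_regular_converse (R : nzRingType) (x : R) :
  @left_regular R^c x <-> right_regular x.
Proof. by []. Qed.

Lemma right_regular_converse (R : nzRingType) (x : R) :
  @right_regular R^c x <-> left_regular x.
Proof. by []. Qed.

Lemma regular_converse (R : nzRingType) (x : R) :
  @regular R^c x <-> regular x.
Proof. by split=> -[]. Qed.

Section ConverseRmorphism.

Variables (B Q : nzRingType) (f : {rmorphism B -> Q}).

Definition converse_rmorph : B^c -> Q^c := f.

HB.instance Definition _ :=
  GRing.isZmodMorphism.Build B^c Q^c converse_rmorph (rmorphB f).
HB.instance Definition _ :=
  GRing.isMonoidMorphism.Build B^c Q^c converse_rmorph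
    (rmorph1 f, fun x y => rmorphM f y x).

Lemma left_ring_of_fractions_converse (S : pred B) :
  right_ring_of_fractions f S -> left_ring_of_fractions converse_rmorph S.
Proof.
case=> invS repQ kerf; split.
- by move=> s /invS[u /is_inverse_converse invs]; exists u.
- move=> q; have [s [b [u [sS /is_inverse_converse invs ->]]]] := repQ q.
  by exists s, b, u.
- exact: kerf.
Qed.

End ConverseRmorphism.

Theorem proposition4p5 :
  (forall (B Q : nzRingType) (f : {rmorphism B -> Q}) (S : pred B),
     Defs.multiplicative S ->
     (forall s, s \in S -> regular s) ->
     left_ring_of_fractions f S ->
     (forall q : Q, left_regular q -> regular q) ->
     forall x : B, left_regular x -> regular x)
  /\
  (forall (B Q : nzRingType) (f : {rmorphism B -> Q}) (S : pred B),
     Defs.multiplicative S ->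
     (forall s, s \in S -> regular s) ->
     right_ring_of_fractions f S ->
     (forall q : Q, right_regular q -> regular q) ->
     forall x : B, right_regular x -> regular x).
Proof.
split=> B Q f S _ Sreg fracS Qreg x xreg.
  exact: left_regular_regular_fractions fracS Sreg Qreg x xreg.
apply/regular_converse.
apply: (left_regular_regular_fractions (left_ring_of_fractions_converse fracS)).
- by move=> s /Sreg/regular_converse.
- by move=> q /right_regular_converse/Qreg/regular_converse.
- exact/left_regular_converse.
Qed.
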